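(* Fix $\alpha,s,t\in\mathbb{C}$. Let $k$ be a positive integer, $a,b\in\mathbb{Z}$ and $u\in\mathbb{C}$. For any integers $c_0=a,c_1,\dots,c_{k-1},c_k=b$ with $|c_{i+1}-c_i|=1$ for $i=0,\dots,k-1$, consider the vector $$\Pi_{1\ldots k}\,\psi^{(1)}(u+k-1)^{c_0}_{c_1}\otimes\psi^{(1)}(u+k-2)^{c_1}_{c_2}\otimes\cdots\otimes\psi^{(1)}(u+1)^{c_{k-2}}_{c_{k-1}}\otimes\psi^{(1)}(u)^{c_{k-1}}_{c_k}\in(\mathbb{C}^2)^{\otimes k}.$$ This vector does not depend on the choice of $c_1,\dots,c_{k-1}$ (subject to the stated constraint).
   Context: $\mathbb{C}^2$ has basis $e_1,e_2$; vectors are written as columns of coordinates. For integers $l$ and $u\in\mathbb{C}$ define $\psi^{(1)}(u)^l_{l+1}=\begin{pmatrix}1\\ \alpha(u-l-t)\end{pmatrix}$, $\psi^{(1)}(u)^l_{l-1}=\begin{pmatrix}1\\ \alpha(u+l+s)\end{pmatrix}$, and $\psi^{(1)}(u)^a_b=0$ if $|a-b|\neq1$. $\Pi_{1\ldots k}$ is the symmetrizer on $(\mathbb{C}^2)^{\otimes k}$: $\Pi_{1\ldots k}\,e_{i_1}\otimes\cdots\otimes e_{i_k}=\frac{1}{k!}\sum_{\sigma\in S_k}e_{i_{\sigma(1)}}\otimes\cdots\otimes e_{i_{\sigma(k)}}$. *)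

From mathcomp Require Import all_boot all_algebra all_fingroup.
From mathcomp Require Import reals complex.
Set Implicit Arguments. Unset Strict Implicit. Unset Printing Implicit Defensive.
Import GRing.Theory Num.Theory.
Local Open Scope ring_scope.

Section Defs.
Variable R : realType.
Local Notation C := (R[i]).

(* A vector of C^2: coordinates indexed by 'I_2 (index 0 = e_1, index 1 = e_2). *)
Definition vec2 := 'I_2 -> C.
(* An element of (C^2)^{(x) k}: coordinates w.r.t. the basis
   e_{i_1} (x) ... (x) e_{i_k}, indexed by multi-indices i : {ffun 'I_k -> 'I_2}. *)
Definition tensor (k : nat) := {ffun 'I_k -> 'I_2} -> C.

Definition col2 (x y : C) : vec2 := fun i => if i == ord0 then x else y.

Definition psi1 (alpha s t u : C) (l m : int) : vec2 :=
  if m == l + 1 then col2 1 (alpha * (u - l%:~R - t))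
  else if m == l - 1 then col2 1 (alpha * (u + l%:~R + s))
  else fun _ => 0.

Definition tensorprod (k : nat) (v : 'I_k -> vec2) : tensor k :=
  fun i => \prod_(j < k) v j (i j).

Definition basis_tensor (k : nat) (i : {ffun 'I_k -> 'I_2}) : tensor k :=
  fun j => if j == i then 1 else 0.

Definition symmetrizer (k : nat) (T : tensor k) : tensor k :=
  fun j => \sum_(i : {ffun 'I_k -> 'I_2}) T i *
    ((k`!%:R)^-1 * \sum_(sigma : 'S_k)
        basis_tensor [ffun p => i (sigma p)] j).

Definition admissible_path (k : nat) (a b : int) (c : nat -> int) : Prop :=
  c 0%N = a /\ c k = b /\
  forall i : nat, (i < k)%N -> `|c i.+1 - c i| = 1.

(* Pi_{1..k} psi(u+k-1)^{c0}_{c1} (x) psi(u+k-2)^{c1}_{c2} (x) ... (x) psi(u)^{c_{k-1}}_{c_k};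
   factor number j (0-based) has spectral parameter u + (k-1-j). *)
Definition fused_vector (alpha s t u : C) (k : nat) (c : nat -> int) : tensor k :=
  symmetrizer (tensorprod (fun j : 'I_k =>
    psi1 alpha s t (u + (k.-1 - j)%:R) (c j) (c j.+1))).

End Defs.
Arguments fused_vector {R} alpha s t u k c _.

From mathcomp Require Import all_boot all_algebra all_fingroup.
From mathcomp Require Import reals complex.
From mathcomp Require Import zify.
From Stdlib Require Import FunctionalExtensionality.
Set Implicit Arguments. Unset Strict Implicit. Unset Printing Implicit Defensive.
Import GRing.Theory Num.Theory.
Local Open Scope ring_scope.

(* Along a path with steps c_{j+1} = c_j +- 1, every factor psi^{(1)} has
   first coordinate 1, so it is col2 1 w_j for a scalar "weight" w_j.
   Writing the spectral parameter of factor j as u + (N - j), an up step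
   has weight alpha (u + (N - j - c_j) - t) and a down step has weight
   alpha (u + (N - j + c_j) + s).  The integer N - j - c_j drops by 2 at
   each up step and is unchanged at down steps (symmetrically for
   N - j + c_j), so the m-th up step and the m-th down step have weights
   determined by m and a alone.  Hence the list of weights is, up to
   permutation, a canonical list depending only on a and the numbers of
   up and down steps, which in turn are fixed by k, a and b. *)

Section Symmetrizer.
Variable R : realType.
Local Notation C := (R[i]).

Lemma symmetrizer_tensorprodE k (v : 'I_k -> vec2 R) (j : {ffun 'I_k -> 'I_2}) :
  symmetrizer (tensorprod v) j =
  (k`!%:R)^-1 * \sum_(sg : 'S_k) \prod_(q < k) v (sg q) (j q).
Proof.
rewrite /symmetrizer.
under eq_bigr => i _ do rewrite mulrCA mulr_sumr.
rewrite -mulr_sumr exchange_big /=; congr (_ * _); apply: eq_bigr => sg _.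
pose i_sg := [ffun p => j ((sg^-1)%g p)].
have j_sg : j = [ffun p => i_sg (sg p)].
  by apply/ffunP => p; rewrite !ffunE permK.
rewrite (bigD1 i_sg) //= big1 ?addr0; last first.
  move=> i ne_i; rewrite /basis_tensor; case: eqP => [e|_]; last by rewrite mulr0.
  suff eq_i : i = i_sg by rewrite eq_i eqxx in ne_i.
  by apply/ffunP => p; rewrite ffunE e ffunE permKV.
rewrite /basis_tensor -j_sg eqxx mulr1 /tensorprod (reindex_inj (@perm_inj _ sg)).
by apply: eq_bigr => q _; rewrite ffunE permK.
Qed.

Lemma symmetrizer_tensorprod_perm k (v : 'I_k -> vec2 R) (tau : 'S_k) :
  symmetrizer (tensorprod (fun q => v (tau q))) = symmetrizer (tensorprod v).
Proof.
apply: functional_extensionality_dep => j; rewrite !symmetrizer_tensorprodE.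
congr (_ * _); rewrite [RHS](reindex_inj (@mulIg _ tau)) /=.
by apply: eq_bigr => sg _; apply: eq_bigr => q _; rewrite permM.
Qed.

Lemma symmetrizer_perm_eq k (f : C -> vec2 R) (x y : seq C) :
  size x = k -> perm_eq y x ->
  symmetrizer (tensorprod (fun q : 'I_k => f x`_q)) =
  symmetrizer (tensorprod (fun q : 'I_k => f y`_q)).
Proof.
move=> /eqP size_x; pose xt := Tuple size_x.
move=> /(@tuple_permP _ _ _ xt) [tau ->].
rewrite -(symmetrizer_tensorprod_perm (fun q => f x`_q) tau).
by congr (symmetrizer (tensorprod _)); apply: functional_extensionality_dep => q;
  rewrite -tnth_nth tnth_mktuple (tnth_nth 0).
Qed.

End Symmetrizer.

Lemma unit_step {l m : int} : `|m - l| = 1 -> m = l + 1 \/ m = l - 1.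
Proof. by lia. Qed.

Lemma step_counts_unique (a b : int) (nu nd nu' nd' : nat) :
  (nu + nd = nu' + nd')%N -> b = a + nu%:Z - nd%:Z -> b = a + nu'%:Z - nd'%:Z ->
  nu = nu' /\ nd = nd'.
Proof. by lia. Qed.

Section Weights.
Variable R : realType.
Local Notation C := (R[i]).
Variables (alpha s t u : C).

(* Weights of an up step and of a down step, as functions of the integer
   x = N - j -+ c_j described in the header. *)
Definition up_weight (x : int) : C := alpha * (u + x%:~R - t).
Definition down_weight (x : int) : C := alpha * (u + x%:~R + s).

Definition step_weight (N l l' : int) : C :=
  if l' == l + 1 then up_weight (N - l) else down_weight (N + l).

Lemma psi1_unit_step (N l l' : int) : `|l' - l| = 1 ->
  psi1 alpha s t (u + N%:~R) l l' = col2 1 (step_weight N l l').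
Proof.
rewrite /psi1 /step_weight /up_weight /down_weight.
case/unit_step => ->; first by rewrite eqxx intrB addrA.
have -> : (l - 1 == l + 1) = false by apply/eqP; lia.
by rewrite eqxx intrD addrA.
Qed.

Definition path_weights (N : int) (c : nat -> int) (k : nat) : seq C :=
  [seq step_weight (N - j%:Z) (c j) (c j.+1) | j <- iota 0 k].

Lemma path_weightsS N c k :
  path_weights N c k.+1 =
  step_weight N (c 0%N) (c 1%N) :: path_weights (N - 1) (fun n => c n.+1) k.
Proof.
rewrite /path_weights /= (iotaDl 1 0 k) -map_comp subr0; congr (_ :: _).
by apply: eq_map => j /=; congr (step_weight _ _ _); lia.
Qed.

Definition progression (f : int -> C) (x : int) (n : nat) : seq C :=
  [seq f (x - 2 * m%:Z) | m <- iota 0 n].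

Lemma progressionS f x n :
  progression f x n.+1 = f x :: progression f (x - 2) n.
Proof.
rewrite /progression /= (iotaDl 1 0 n) -map_comp subr0; congr (_ :: _).
by apply: eq_map => m /=; congr f; lia.
Qed.

Definition canonical_weights (x y : int) (nu nd : nat) : seq C :=
  progression up_weight x nu ++ progression down_weight y nd.

Lemma canonical_weights_up x y nu nd :
  canonical_weights x y nu.+1 nd = up_weight x :: canonical_weights (x - 2) y nu nd.
Proof. by rewrite /canonical_weights progressionS. Qed.

Lemma canonical_weights_down x y nu nd :
  perm_eq (canonical_weights x y nu nd.+1)
          (down_weight y :: canonical_weights x (y - 2) nu nd).
Proof. by rewrite /canonical_weights progressionS -cat1s perm_catCA. Qed.

Lemma path_weights_canonical k : forall N (c : nat -> int),
  (forall i, (i < k)%N -> `|c i.+1 - c i| = 1) ->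
  exists nu nd : nat, [/\ (nu + nd = k)%N, c k = c 0%N + nu%:Z - nd%:Z &
    perm_eq (path_weights N c k)
            (canonical_weights (N - c 0%N) (N + c 0%N) nu nd)].
Proof.
elim: k => [|k IH] N c unit_c.
  by exists 0%N, 0%N; split => //; rewrite addr0 subr0.
have [nu [nd [sum_k end_k perm_k]]] :=
  IH (N - 1) (fun n => c n.+1) (fun i lt_ik => unit_c i.+1 lt_ik).
rewrite path_weightsS; case: (unit_step (unit_c 0%N isT)) => step.
- exists nu.+1, nd; split; [lia | by rewrite end_k step; lia |].
  rewrite canonical_weights_up /step_weight step eqxx perm_cons.
  have -> : N - c 0%N - 2 = N - 1 - c 1%N by lia.
  by have -> : N + c 0%N = N - 1 + c 1%N by lia.
- exists nu, nd.+1; split; [lia | by rewrite end_k step; lia |].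
  rewrite (permPr (canonical_weights_down _ _ _ _)).
  rewrite /step_weight step (_ : (c 0%N - 1 == c 0%N + 1) = false); last by apply/eqP; lia.
  rewrite perm_cons.
  have -> : N - c 0%N = N - 1 - c 1%N by lia.
  by have -> : N + c 0%N - 2 = N - 1 + c 1%N by lia.
Qed.

Lemma fused_vector_weights k a b (c : nat -> int) :
  admissible_path k a b c ->
  fused_vector alpha s t u k c =
  symmetrizer (tensorprod (fun q : 'I_k =>
    col2 1 (path_weights (k.-1)%:Z c k)`_q)).
Proof.
move=> [_ [_ unit_c]]; congr (symmetrizer (tensorprod _)).
apply: functional_extensionality_dep => q.
rewrite /path_weights (nth_map 0%N) ?size_iota // nth_iota // add0n.
rewrite -psi1_unit_step ?unit_c // subzn; last by have := ltn_ord q; lia.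
by rewrite -pmulrn.
Qed.

End Weights.

Theorem proposition4 (R : realType) (alpha s t : R[i]) (k : nat) (a b : int)
    (u : R[i]) (c c' : nat -> int) :
  (0 < k)%N ->
  admissible_path k a b c -> admissible_path k a b c' ->
  fused_vector alpha s t u k c = fused_vector alpha s t u k c'.
Proof.
move=> _ path_c path_c'.
rewrite (fused_vector_weights alpha s t u path_c).
rewrite (fused_vector_weights alpha s t u path_c').
have [c0 [ck unit_c]] := path_c; have [c0' [ck' unit_c']] := path_c'.
have [nu [nd [sum_c end_c perm_c]]] :=
  path_weights_canonical alpha s t u (k.-1)%:Z unit_c.
have [nu' [nd' [sum_c' end_c' perm_c']]] :=
  path_weights_canonical alpha s t u (k.-1)%:Z unit_c'.
rewrite c0 ck in end_c; rewrite c0' ck' in end_c'.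
have [eq_nu eq_nd] := step_counts_unique (etrans sum_c (esym sum_c')) end_c end_c'.
rewrite c0 eq_nu eq_nd in perm_c; rewrite c0' in perm_c'.
apply: symmetrizer_perm_eq; first by rewrite size_map size_iota.
by rewrite (permPl perm_c') perm_sym.
Qed.
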